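(* Consider the private counterfactual retrieval problem described in the context, with $N=2$ servers, database size $M$, dimension $d$, attribute bound $R$, and let $q>R^2 d$ be a prime. Then there exists a scheme over $\mathbb{F}_q$ that satisfies decodability (the user recovers exactly the index $\theta^*=\arg\min_{i\in[M]}\|x-y_i\|^2$ of the closest accepted sample) and perfect user privacy, and whose communication cost is $2(d+M)$ symbols of $\mathbb{F}_q$.
   Context: Setting (private counterfactual retrieval, PCR). A database $\mathcal{D}=\{y_1,\dots,y_M\}$ of accepted samples, each $y_i\in[0:R]^d$ (integer attributes between $0$ and $R$), is stored in replicated form on $N$ non-colluding, non-communicating servers. A user holds a (rejected) sample $x\in[0:R]^d$. All integers are viewed as elements of the prime field $\mathbb{F}_q$. The goal is for the user to learn $\theta^*=\arg\min_{i\in[M]}\|x-y_i\|^2$ (squared Euclidean distance computed over the integers). A scheme works as follows: the user, using $x$ and private randomness, sends a query $Q_n$ (a tuple of elements of $\mathbb{F}_q$) to server $n\in[N]$; the servers share common randomness $Z'$ unknown to the user; server $n$ returns an answer $A_n$ that is a deterministic function of $(\mathcal{D},Q_n,Z')$, i.e. $H(A_n\mid \mathcal{D},Q_n,Z')=0$. Decodability: $H(\theta^*\mid Q_{[N]},A_{[N]},x)=0$. Perfect user privacy: for every $n\in[N]$, $I(x,\theta^*;Q_n,A_n\mid \mathcal{D})=0$. The communication cost is the total number of $\mathbb{F}_q$ symbols uploaded in all queries plus downloaded in all answers. *)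

From HB Require Import structures.
From mathcomp Require Import all_boot all_order all_algebra.
Set Implicit Arguments. Unset Strict Implicit. Unset Printing Implicit Defensive.
Import Order.TTheory GRing.Theory Num.Theory.

Definition sample (d R : nat) := 'I_d -> 'I_R.+1.
Definition database (M d R : nat) := 'I_M -> sample d R.

Definition sqdist d R (x y : sample d R) : nat :=
  (\sum_(j < d) `|(x j : nat) - (y j : nat)| ^ 2)%N.

(* i is theta^* = argmin_i ||x - y_i||^2, ties broken towards the smallest index *)
Definition is_theta_star M d R (D : database M d R) (x : sample d R) (i : 'I_M) : Prop :=
  (forall j : 'I_M, sqdist x (D i) <= sqdist x (D j))%N /\
  (forall j : 'I_M, sqdist x (D j) = sqdist x (D i) -> (i <= j)%N).

(* The user's private randomness is uniform
   on the nonempty finite type U, the servers' common randomness Z' is uniform on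
   the nonempty finite type Z, independent of each other and of (D, x). *)
Record pcr_scheme (q N M d R : nat) := PcrScheme {
  URand : finType;
  ZRand : finType;
  URand_nonempty : (0 < #|URand|)%N;
  ZRand_nonempty : (0 < #|ZRand|)%N;
  qlen : 'I_N -> nat;
  alen : 'I_N -> nat;
  query : forall n : 'I_N, sample d R -> URand -> {ffun 'I_(qlen n) -> 'F_q};
  answer : forall n : 'I_N, database M d R -> {ffun 'I_(qlen n) -> 'F_q} -> ZRand ->
           {ffun 'I_(alen n) -> 'F_q};
  decode : sample d R -> (forall n : 'I_N, {ffun 'I_(qlen n) -> 'F_q}) ->
           (forall n : 'I_N, {ffun 'I_(alen n) -> 'F_q}) -> 'I_M
}.

Arguments query {q N M d R} p n _ _.
Arguments answer {q N M d R} p n _ _ _.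
Arguments decode {q N M d R} p _ _ _.
Arguments qlen {q N M d R} p _.
Arguments alen {q N M d R} p _.
Section SchemeProps.
Variables (q N M d R : nat) (S : pcr_scheme q N M d R).

(* Decodability: H(theta^* | Q_[N], A_[N], x) = 0, i.e. for every database and
   every x, and every realization of the randomness, the decoder applied to
   (x, Q_[N], A_[N]) returns theta^*. *)
Definition decodable : Prop :=
  forall (D : database M d R) (x : sample d R) (u : URand S) (z : ZRand S),
    is_theta_star D x
      (decode S x (fun n => query S n x u) (fun n => answer S n D (query S n x u) z)).

Definition view_prob (n : 'I_N) (D : database M d R) (x : sample d R)
    (a : {ffun 'I_(qlen S n) -> 'F_q}) (b : {ffun 'I_(alen S n) -> 'F_q}) : rat :=
  (#|[set uz : URand S * ZRand S |
       (query S n x uz.1 == a) && (answer S n D (query S n x uz.1) uz.2 == b)]|%:R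
   / (#|URand S| * #|ZRand S|)%:R)%R.

(* Perfect user privacy: I(x, theta^*; Q_n, A_n | D) = 0 for every n, i.e. given D
   the distribution of the view (Q_n, A_n) of server n does not depend on x
   (theta^* being a function of (D, x)). *)
Definition perfectly_private : Prop :=
  forall (n : 'I_N) (D : database M d R) (x x' : sample d R)
         (a : {ffun 'I_(qlen S n) -> 'F_q}) (b : {ffun 'I_(alen S n) -> 'F_q}),
    @view_prob n D x a b = @view_prob n D x' a b.

Definition comm_cost : nat := (\sum_(n < N) (qlen S n + alen S n))%N.

End SchemeProps.

(** The user splits the embedding of x into two additive shares u and x - u
    with u uniform on F_q^d, so each server sees a uniformly random vector
    whatever x is.  Server 1 returns ||y_i||^2 - 2<u, y_i> and server 2 returns
    -2<x - u, y_i> for every i; adding ||x||^2 to the sum of the two answers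
    gives ||x - y_i||^2 in F_q, and since this distance is at most R^2 d < q the
    user reads it off exactly and picks the minimising index.  Each server
    receives d symbols and sends M. *)

From mathcomp Require Import all_boot all_order all_algebra.
From mathcomp Require Import zify ring.
Set Implicit Arguments. Unset Strict Implicit. Unset Printing Implicit Defensive.
Import GRing.Theory.

Section SampleArith.
Variables d R : nat.

Definition dotn (x y : sample d R) : nat := (\sum_(j < d) x j * y j)%N.

Lemma sqdist_polarization (x y : sample d R) :
  (sqdist x y + 2 * dotn x y = dotn x x + dotn y y)%N.
Proof.
rewrite /sqdist /dotn big_distrr -!big_split /=.
by apply: eq_bigr => j _; rewrite sqrn_dist !mulnn.
Qed.

Lemma leq_distn (a b r : nat) : (a <= r)%N -> (b <= r)%N -> (`|a - b| <= r)%N.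
Proof.
move=> ar br; case: (leqP b a) => [ba | /ltnW ab].
  by rewrite distnEl // (leq_trans (leq_subr _ _)).
by rewrite distnEr // (leq_trans (leq_subr _ _)).
Qed.

Lemma leq_sqdist (x y : sample d R) : (sqdist x y <= R ^ 2 * d)%N.
Proof.
have -> : (R ^ 2 * d = \sum_(j < d) R ^ 2)%N by rewrite sum_nat_const card_ord mulnC.
by apply: leq_sum => j _; rewrite leq_exp2r // leq_distn // -ltnS.
Qed.

End SampleArith.

Lemma val_Fp_nat_small (q n : nat) : prime q -> (n < q)%N -> val (n%:R : 'F_q)%R = n.
Proof. by move=> q_pr ltnq; rewrite [val _]val_Fp_nat // modn_small. Qed.

Section LexMin.
Variables (M : nat) (i0 : 'I_M) (f : 'I_M -> nat).

(* Minimising [f i * M + i] breaks ties in [f] towards the smallest index. *)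
Definition lexmin : 'I_M := [arg min_(i < i0) (f i * M + i)%N].

Lemma lexmin_spec :
  (forall j, f lexmin <= f j)%N /\ (forall j, f j = f lexmin -> (lexmin <= j)%N).
Proof.
rewrite /lexmin; case: arg_minnP => // i _ min_i.
split=> j; have := min_i j isT; have := ltn_ord i; have := ltn_ord j; nia.
Qed.

Lemma lexmin_theta_star d R (D : database M d R) (x : sample d R) :
  (forall i, f i = sqdist x (D i)) -> is_theta_star D x lexmin.
Proof.
move=> f_sqdist; have [min_lex tie_lex] := lexmin_spec.
split=> j; rewrite -!f_sqdist; first exact: min_lex.
exact: tie_lex.
Qed.

End LexMin.

Lemma card_view_bij (U V Z : finType) (f : U -> V) (P : V -> Z -> bool) (a : V) :
  bijective f ->
  #|[set uz : U * Z | (f uz.1 == a) && P (f uz.1) uz.2]| = #|[set z | P a z]|.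
Proof.
case=> g fK gK.
have -> : [set uz : U * Z | (f uz.1 == a) && P (f uz.1) uz.2]
          = setX [set g a] [set z | P a z].
  apply/setP => -[u z]; rewrite !inE /=.
  by apply/andP/andP => -[/eqP Eu Pz]; [rewrite -Eu fK | rewrite Eu gK].
by rewrite cardsX cards1 mul1n.
Qed.

Lemma perfectly_private_bij (q N M d R : nat) (S : pcr_scheme q N M d R) :
  (forall n x, bijective (query S n x)) -> perfectly_private S.
Proof.
move=> query_bij n D x x' a b.
by rewrite /view_prob !(card_view_bij (fun v z => answer S n D v z == b) _ (query_bij _ _)).
Qed.

Section TwoServerScheme.
Local Open Scope ring_scope.
Variables (q M d R : nat).

Definition embed (x : sample d R) : {ffun 'I_d -> 'F_q} := [ffun j => (x j : nat)%:R].

Definition dotF (u v : {ffun 'I_d -> 'F_q}) : 'F_q := \sum_(j < d) u j * v j.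

Lemma dotF_embed (x y : sample d R) : dotF (embed x) (embed y) = (dotn x y)%:R.
Proof. by rewrite /dotF /dotn natr_sum; apply: eq_bigr => j _; rewrite !ffunE natrM. Qed.

Lemma dotFBl (u v w : {ffun 'I_d -> 'F_q}) : dotF (u - v) w = dotF u w - dotF v w.
Proof. by rewrite /dotF -sumrB; apply: eq_bigr => j _; rewrite !ffunE mulrBl. Qed.

Definition share (n : 'I_2) (x : sample d R) (u : {ffun 'I_d -> 'F_q}) :
    {ffun 'I_d -> 'F_q} :=
  if n == ord0 then u else embed x - u.

Lemma share_bij n x : bijective (share n x).
Proof.
rewrite /share; case: (n == ord0); first by exists id.
by exists (fun v => embed x - v) => v; rewrite subKr.
Qed.

Definition respond (n : 'I_2) (D : database M d R) (Q : {ffun 'I_d -> 'F_q}) (_ : unit) :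
    {ffun 'I_M -> 'F_q} :=
  [ffun i => (if n == ord0 then dotF (embed (D i)) (embed (D i)) else 0)
             - 2 * dotF Q (embed (D i))].

Lemma respond_shares D x u i :
  respond ord0 D (share ord0 x u) tt i + respond ord_max D (share ord_max x u) tt i
  + dotF (embed x) (embed x) = (sqdist x (D i))%:R.
Proof.
have /(congr1 (fun k => k%:R : 'F_q)) /= := sqdist_polarization x (D i).
rewrite natrD natrM natrD -!dotF_embed => polar.
rewrite !ffunE /share /= dotFBl.
have -> : (sqdist x (D i))%:R = (dotF (embed x) (embed x) + dotF (embed (D i)) (embed (D i))
                                  - 2 * dotF (embed x) (embed (D i))) :> 'F_q.
  by rewrite -polar addrK.
ring.
Qed.

Variable i0 : 'I_M.

Definition nearest (x : sample d R) (_ : forall n : 'I_2, {ffun 'I_d -> 'F_q})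
    (A : forall n : 'I_2, {ffun 'I_M -> 'F_q}) : 'I_M :=
  lexmin i0 (fun i => val (A ord0 i + A ord_max i + dotF (embed x) (embed x))).

Lemma nearest_theta_star (D : database M d R) x u :
  prime q -> (R ^ 2 * d < q)%N ->
  is_theta_star D x
    (nearest x (fun n => share n x u) (fun n => respond n D (share n x u) tt)).
Proof.
move=> q_pr lt_dist_q; apply: lexmin_theta_star => i.
by rewrite respond_shares val_Fp_nat_small // (leq_ltn_trans (leq_sqdist _ _)).
Qed.

End TwoServerScheme.

Theorem theorem1 (M d R q : nat) (hM : (0 < M)%N) (hq : prime q)
    (hqR : (R ^ 2 * d < q)%N) :
  exists S : pcr_scheme q 2 M d R,
    decodable S /\ perfectly_private S /\ comm_cost S = (2 * (d + M))%N.
Proof.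
have U_gt0 : (0 < #|{ffun 'I_d -> 'F_q}|)%N by apply/card_gt0P; exists 0%R.
have Z_gt0 : (0 < #|{: unit}|)%N by rewrite card_unit.
pose S := @PcrScheme q 2 M d R _ _ U_gt0 Z_gt0 (fun _ => d) (fun _ => M)
            (@share q d R) (@respond q M d R) (nearest (Ordinal hM)).
exists S; split; last split.
- by move=> D x u []; apply: nearest_theta_star.
- by apply: perfectly_private_bij => n x; apply: share_bij.
- by rewrite /comm_cost big_ord_recr big_ord1 mul2n -addnn.
Qed.
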